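(* Let $\mathcal{M}_i=(E_i,\rho_i)$, $i=1,2,3$, be $q$-matroids. Then, on the ground space $E_1\oplus E_2\oplus E_3$, $(\mathcal{M}_1\oplus\mathcal{M}_2)\oplus\mathcal{M}_3=\mathcal{M}_1\oplus(\mathcal{M}_2\oplus\mathcal{M}_3)$.
   Context: Let $\mathbb{F}=\mathbb{F}_q$. A $q$-matroid is $\mathcal{M}=(E,\rho)$, $E$ a finite-dimensional $\mathbb{F}$-vector space, $\rho$ from subspaces to $\mathbb{Z}_{\ge0}$ with $0\le\rho(V)\le\dim V$, monotone and submodular. Direct sum: for $q$-matroids $(E_1,\rho_1),(E_2,\rho_2)$ and $E=E_1\oplus E_2$ (each $E_i$ identified with its image) with projections $\pi_i:E\to E_i$, $\mathcal{M}_1\oplus\mathcal{M}_2=(E,\rho)$ where $\rho(V)=\dim V+\min_{X\le V}(\rho_1(\pi_1(X))+\rho_2(\pi_2(X))-\dim X)$. *)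

From mathcomp Require Import all_boot all_algebra all_field.
From mathcomp Require Import boolp.
Set Implicit Arguments. Unset Strict Implicit. Unset Printing Implicit Defensive.
Import GRing.Theory.
Local Open Scope ring_scope.

Definition qmatroid_rank (F : finFieldType) (E : vectType F)
  (rho : {vspace E} -> nat) : Prop :=
  [/\ forall V : {vspace E}, (rho V <= \dim V)%N,
      forall U V : {vspace E}, (U <= V)%VS -> (rho U <= rho V)%N &
      forall U V : {vspace E}, (rho (U + V)%VS + rho (U :&: V)%VS <= rho U + rho V)%N].

Record qmatroid (F : finFieldType) (E : vectType F) := QMatroid {
  qrank :> {vspace E} -> nat;
  qrankP : qmatroid_rank qrank }.

Definition proj1 (F : finFieldType) (E1 E2 : vectType F) : 'Hom((E1 * E2)%type, E1) :=
  linfun (fun x : (E1 * E2)%type => x.1).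
Definition proj2 (F : finFieldType) (E1 E2 : vectType F) : 'Hom((E1 * E2)%type, E2) :=
  linfun (fun x : (E1 * E2)%type => x.2).

(* the set of values  dim V + rho1(pi1 X) + rho2(pi2 X) - dim X  for X <= V
   (no truncation occurs since dim X <= dim V) *)
Definition dsum_vals (F : finFieldType) (E1 E2 : vectType F)
  (rho1 : {vspace E1} -> nat) (rho2 : {vspace E2} -> nat)
  (V : {vspace (E1 * E2)%type}) : pred nat :=
  fun n => `[< exists X : {vspace (E1 * E2)%type}, (X <= V)%VS /\
     n = (\dim V + rho1 (proj1 E1 E2 @: X)%VS + rho2 (proj2 E1 E2 @: X)%VS - \dim X)%N >].

Lemma dsum_vals_ex (F : finFieldType) (E1 E2 : vectType F)
  (rho1 : {vspace E1} -> nat) (rho2 : {vspace E2} -> nat) (V : {vspace (E1 * E2)%type}) :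
  exists n, dsum_vals rho1 rho2 V n.
Proof.
exists (\dim V + rho1 (proj1 E1 E2 @: 0)%VS + rho2 (proj2 E1 E2 @: 0)%VS - \dim (0 : {vspace (E1 * E2)%type}))%N.
apply/asboolP; exists 0%VS; split => //; exact: sub0v.
Qed.

Definition dsum_rank (F : finFieldType) (E1 E2 : vectType F)
  (rho1 : {vspace E1} -> nat) (rho2 : {vspace E2} -> nat)
  (V : {vspace (E1 * E2)%type}) : nat :=
  ex_minn (dsum_vals_ex rho1 rho2 V).

Definition dsum_assoc (F : finFieldType) (E1 E2 E3 : vectType F) :
  'Hom(((E1 * E2) * E3)%type, (E1 * (E2 * E3))%type) :=
  linfun (fun x : ((E1 * E2) * E3)%type => (x.1.1, (x.1.2, x.2))).

(* Both sides are minima, over subspaces X of V, of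
   dim V + rho1(X_1) + rho2(X_2) + rho3(X_3) - dim X, where X_i are the images
   of X in the three summands. To see this, flatten a nested minimum: for
   X <= V and an optimal Y <= p(X) for the inner minimum, the subspace
   X :&: p^-1(Y) maps onto Y, loses exactly dim p(X) - dim Y dimensions, and
   only decreases the outer (monotone) rank, so it does at least as well. *)
From HB Require Import structures.
From mathcomp Require Import all_boot all_algebra all_field.
From mathcomp Require Import boolp zify.
Set Implicit Arguments. Unset Strict Implicit. Unset Printing Implicit Defensive.

Section SubspaceMinimum.
Variable F : fieldType.

Lemma limg_cap_lpreim (E W : vectType F) (f : 'Hom(E, W)) X Y :
  (Y <= f @: X)%VS -> (f @: (X :&: f @^-1: Y))%VS = Y.
Proof.
move=> sYfX; apply/eqP; rewrite eqEsubv; apply/andP; split.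
  apply: subv_trans (limgS _ (capvSr _ _)) _.
  by rewrite lpreimK // (subv_trans sYfX) ?limgS ?subvf.
apply/subvP => y Yy; have /memv_imgP [x Xx y_fx] := subvP sYfX y Yy.
by rewrite y_fx memv_img // memv_cap Xx -memv_preim -y_fx.
Qed.

Section Submin.
Variable E : vectType F.
Implicit Types (g : {vspace E} -> nat) (V X : {vspace E}).

Definition submin_val g V : pred nat :=
  fun n => `[< exists2 X, (X <= V)%VS & (n + \dim X = \dim V + g X)%N >].

Lemma submin_val_ex g V : exists n, submin_val g V n.
Proof.
exists (\dim V + g 0%VS)%N; apply/asboolP.
by exists 0%VS; rewrite ?sub0v // dimv0 addn0.
Qed.

(* [submin g V] is the minimum of dim V + g X - dim X over X <= V; [submin_val]
   states it without truncated subtraction. *)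
Definition submin g V : nat := ex_minn (submin_val_ex g V).

Lemma submin_witness g V :
  exists2 X, (X <= V)%VS & (submin g V + \dim X = \dim V + g X)%N.
Proof. by rewrite /submin; case: ex_minnP => m /asboolP. Qed.

Lemma submin_le g V X : (X <= V)%VS -> (submin g V + \dim X <= \dim V + g X)%N.
Proof.
move=> sXV; have leXV := dimvS sXV.
rewrite /submin; case: ex_minnP => m _ /(_ (\dim V + g X - \dim X)%N).
suff: submin_val g V (\dim V + g X - \dim X) by lia.
by apply/asboolP; exists X => //; lia.
Qed.

Lemma eq_submin g g' V : g =1 g' -> submin g V = submin g' V.
Proof. by move=> /funext ->. Qed.

End Submin.

Lemma submin_limg (E E' : vectType F) (f : 'Hom(E, E')) (g : {vspace E'} -> nat) V :
  lker f == 0%VS -> submin g (f @: V) = submin (fun X => g (f @: X)%VS) V.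
Proof.
move=> /eqP kerf0; have dim_f U : \dim (f @: U) = \dim U.
  by rewrite limg_dim_eq // kerf0 capv0.
apply/eqP; rewrite eqn_leq; apply/andP; split.
  have [X sXV eqX] := submin_witness (fun X => g (f @: X)%VS) V.
  have := submin_le g (limgS f sXV); rewrite !dim_f; lia.
have [Y sYfV eqY] := submin_witness g (f @: V).
have := submin_le (fun X => g (f @: X)%VS) (capvSl V (f @^-1: Y)).
have := dim_f (V :&: f @^-1: Y)%VS; rewrite limg_cap_lpreim // dim_f in eqY *; lia.
Qed.

Lemma submin_flatten (E W : vectType F) (p : 'Hom(E, W)) (K : {vspace W} -> nat)
    (R : {vspace E} -> nat) V :
  {homo R : X Y / (X <= Y)%VS >-> (X <= Y)%N} ->
  submin (fun X => submin K (p @: X)%VS + R X)%N V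
  = submin (fun X => K (p @: X)%VS + R X)%N V.
Proof.
move=> monoR; apply/eqP; rewrite eqn_leq; apply/andP; split.
  have [X sXV eqX] := submin_witness (fun X => K (p @: X)%VS + R X)%N V.
  have := submin_le (fun X => submin K (p @: X)%VS + R X)%N sXV.
  have := submin_le K (subvv (p @: X)); lia.
have [X sXV eqX] := submin_witness (fun X => submin K (p @: X)%VS + R X)%N V.
have [Y sYpX eqY] := submin_witness K (p @: X).
set Xt := (X :&: p @^-1: Y)%VS.
have ker_Xt : (Xt :&: lker p = X :&: lker p)%VS.
  rewrite -capvA; congr (_ :&: _)%VS; apply/capv_idPr.
  by rewrite -lpreim0 lpreimS ?sub0v.
have := limg_ker_dim p Xt; have := limg_ker_dim p X.
have sXtV : (Xt <= V)%VS := subv_trans (capvSl _ _) sXV.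
have := monoR Xt X (capvSl _ _).
have := submin_le (fun X => K (p @: X)%VS + R X)%N sXtV.
rewrite ker_Xt limg_cap_lpreim //; lia.
Qed.

End SubspaceMinimum.

Section DirectSum.
Variable F : finFieldType.

Lemma dsum_rankE (E1 E2 : vectType F) (r1 : {vspace E1} -> nat) (r2 : {vspace E2} -> nat) :
  dsum_rank r1 r2
  = submin (fun X => r1 (proj1 E1 E2 @: X)%VS + r2 (proj2 E1 E2 @: X)%VS)%N.
Proof.
apply/funext => V; apply: eq_ex_minn => n; apply/asboolP/asboolP.
  case=> X [sXV ->]; exists X => //.
  by rewrite addnA subnK // -addnA (leq_trans (dimvS sXV)) ?leq_addr.
by case=> X sXV eqX; exists X; split; rewrite // -addnA -eqX addnK.
Qed.

Variables E1 E2 E3 : vectType F.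

Definition dsum_assoc_fun (x : ((E1 * E2) * E3)%type) : (E1 * (E2 * E3))%type :=
  (x.1.1, (x.1.2, x.2)).
Fact dsum_assoc_fun_is_linear : linear dsum_assoc_fun. Proof. by []. Qed.
HB.instance Definition _ :=
  GRing.isLinear.Build F _ _ _ dsum_assoc_fun dsum_assoc_fun_is_linear.

Lemma dsum_assocE x : dsum_assoc E1 E2 E3 x = (x.1.1, (x.1.2, x.2)).
Proof. exact: (lfunE dsum_assoc_fun x). Qed.

Lemma lker_dsum_assoc : lker (dsum_assoc E1 E2 E3) == 0%VS.
Proof.
by apply/lker0P => -[[? ?] ?] [[? ?] ?]; rewrite !dsum_assocE => -[-> -> ->].
Qed.

Lemma proj1_dsum_assoc :
  (proj1 E1 (E2 * E3)%type \o dsum_assoc E1 E2 E3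
   = proj1 E1 E2 \o proj1 (E1 * E2)%type E3)%VF.
Proof. by apply/lfunP => x; rewrite !comp_lfunE dsum_assocE !lfunE. Qed.

Lemma proj12_dsum_assoc :
  (proj1 E2 E3 \o proj2 E1 (E2 * E3)%type \o dsum_assoc E1 E2 E3
   = proj2 E1 E2 \o proj1 (E1 * E2)%type E3)%VF.
Proof. by apply/lfunP => x; rewrite !comp_lfunE dsum_assocE !lfunE. Qed.

Lemma proj22_dsum_assoc :
  (proj2 E2 E3 \o proj2 E1 (E2 * E3)%type \o dsum_assoc E1 E2 E3
   = proj2 (E1 * E2)%type E3)%VF.
Proof. by apply/lfunP => x; rewrite !comp_lfunE dsum_assocE !lfunE. Qed.

End DirectSum.

Theorem corollary6p3 (F : finFieldType) (E1 E2 E3 : vectType F)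
  (M1 : qmatroid E1) (M2 : qmatroid E2) (M3 : qmatroid E3) :
  forall V : {vspace ((E1 * E2) * E3)%type},
    dsum_rank (dsum_rank M1 M2) M3 V
    = dsum_rank M1 (dsum_rank M2 M3) (dsum_assoc E1 E2 E3 @: V)%VS.
Proof.
move=> V; have [_ mono1 _] := qrankP M1; have [_ mono3 _] := qrankP M3.
rewrite !dsum_rankE.
rewrite submin_flatten; last first.
  by move=> X Y /(limgS (proj2 _ _)) /mono3.
under [RHS]eq_submin do rewrite addnC.
rewrite submin_flatten; last first.
  by move=> X Y /(limgS (proj1 _ _)) /mono1.
rewrite submin_limg ?lker_dsum_assoc //; apply: eq_submin => X.
rewrite -!limg_comp proj1_dsum_assoc proj12_dsum_assoc proj22_dsum_assoc.
by rewrite [RHS]addnC addnA.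
Qed.
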